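(* Let $\mathsf{Ch}_3=\langle a,b,c\rangle$. Define $2\times2$ tropical matrices (writing $-$ for $-\infty$): $\rho_1$: $a\mapsto\begin{pmatrix}1&0\\-&0\end{pmatrix}$, $b\mapsto\begin{pmatrix}0&0\\-&1\end{pmatrix}$, $c\mapsto\begin{pmatrix}0&0\\-&1\end{pmatrix}$; $\rho_2$: $a\mapsto\begin{pmatrix}1&0\\-&0\end{pmatrix}$, $b\mapsto\begin{pmatrix}1&0\\-&0\end{pmatrix}$, $c\mapsto\begin{pmatrix}0&0\\-&1\end{pmatrix}$; $\rho_3$: $a\mapsto\begin{pmatrix}1&1\\-&0\end{pmatrix}$, $b\mapsto\begin{pmatrix}0&0\\-&0\end{pmatrix}$, $c\mapsto\begin{pmatrix}0&1\\-&1\end{pmatrix}$. Then the map $\rho=(\rho_1,\rho_2,\rho_3):\mathsf{Ch}_3\to(\mathcal M_2(\mathbb T))^3$, sending a word in $a,b,c$ to the corresponding products of these matrices (and the identity of $\mathsf{Ch}_3$ to the triple $(I_1,I_2,I_3)$ with $I_1=I_2=\begin{pmatrix}0&-1\\-&0\end{pmatrix}$, $I_3=\begin{pmatrix}0&0\\-&0\end{pmatrix}$, each of which acts as a two-sided identity on the semigroup generated by the corresponding generator images), is a well-defined injective semigroup homomorphism.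
   Context: The Chinese monoid $\mathsf{Ch}_3=\langle a,b,c\rangle$ (with $a=a_1,b=a_2,c=a_3$) is presented by the relations $a_ja_ka_i=a_ka_ja_i=a_ka_ia_j$ for all $1\le i\le j\le k\le 3$. $\mathbb T=\mathbb R\cup\{-\infty\}$ is the max-plus semiring (addition $\max$, multiplication ordinary $+$), and $\mathcal M_2(\mathbb T)$ is the monoid of $2\times2$ matrices over $\mathbb T$ with product $(AB)_{ij}=\max_k(A_{ik}+B_{kj})$; $(\mathcal M_2(\mathbb T))^3$ has componentwise product. *)

From HB Require Import structures.
From mathcomp Require Import all_boot all_order all_algebra.
From mathcomp Require Import reals.
Set Implicit Arguments. Unset Strict Implicit. Unset Printing Implicit Defensive.
Import Order.TTheory GRing.Theory Num.Theory.
Local Open Scope ring_scope.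

(* Generators a = a_1, b = a_2, c = a_3 are encoded as the ordinals 0,1,2 : 'I_3;
   words are sequences of generators (the free monoid); Ch_3 is the quotient of
   the free monoid by the congruence [chcong] generated by the defining relations
   a_j a_k a_i = a_k a_j a_i = a_k a_i a_j  for all i <= j <= k. *)
Definition word := seq 'I_3.

Definition ch_rel (x y : word) : Prop :=
  exists (i j k : 'I_3), (i <= j)%N /\ (j <= k)%N /\
    let w1 := [:: j; k; i] in let w2 := [:: k; j; i] in let w3 := [:: k; i; j] in
    (x = w1 \/ x = w2 \/ x = w3) /\ (y = w1 \/ y = w2 \/ y = w3).

Inductive chcong : word -> word -> Prop :=
  | chcong_step p q x y : ch_rel x y -> chcong (p ++ x ++ q) (p ++ y ++ q)
  | chcong_refl u : chcong u u
  | chcong_sym u v : chcong u v -> chcong v u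
  | chcong_trans u v w : chcong u v -> chcong v w -> chcong u w.

(* None stands for -oo. *)
Definition trop (R : realType) := option R.

Definition tadd (R : realType) (x y : trop R) : trop R :=
  match x, y with
  | None, _ => y
  | _, None => x
  | Some a, Some b => Some (Num.max a b)
  end.

Definition tmul (R : realType) (x y : trop R) : trop R :=
  match x, y with
  | Some a, Some b => Some (a + b)
  | _, _ => None
  end.

Definition tmx (R : realType) := 'M[trop R]_2.

Definition tmxmul (R : realType) (A B : tmx R) : tmx R :=
  \matrix_(i < 2, j < 2)
    tadd (tmul (A i ord0) (B ord0 j)) (tmul (A i ord_max) (B ord_max j)).

Definition mx2 (R : realType) (x y z t : trop R) : tmx R :=
  \matrix_(i < 2, j < 2)
    if i == ord0 then (if j == ord0 then x else y) else (if j == ord0 then z else t).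

Definition T0 (R : realType) : trop R := Some 0.
Definition T1 (R : realType) : trop R := Some 1.
Definition Tm1 (R : realType) : trop R := Some (-1).
Definition Tinf (R : realType) : trop R := None.

(* image of generator g under rho_r (r = 0,1,2 for rho_1, rho_2, rho_3) *)
Definition genmx (R : realType) (r g : 'I_3) : tmx R :=
  match nat_of_ord r, nat_of_ord g with
  | 0, 0 => mx2 (T1 R) (T0 R) (Tinf R) (T0 R)
  | 0, 1 => mx2 (T0 R) (T0 R) (Tinf R) (T1 R)
  | 0, _ => mx2 (T0 R) (T0 R) (Tinf R) (T1 R)
  | 1, 0 => mx2 (T1 R) (T0 R) (Tinf R) (T0 R)
  | 1, 1 => mx2 (T1 R) (T0 R) (Tinf R) (T0 R)
  | 1, _ => mx2 (T0 R) (T0 R) (Tinf R) (T1 R)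
  | _, 0 => mx2 (T1 R) (T1 R) (Tinf R) (T0 R)
  | _, 1 => mx2 (T0 R) (T0 R) (Tinf R) (T0 R)
  | _, _ => mx2 (T0 R) (T1 R) (Tinf R) (T1 R)
  end.

Definition idmx (R : realType) (r : 'I_3) : tmx R :=
  match nat_of_ord r with
  | 0 | 1 => mx2 (T0 R) (Tm1 R) (Tinf R) (T0 R)
  | _ => mx2 (T0 R) (T0 R) (Tinf R) (T0 R)
  end.

Fixpoint rho_ne (R : realType) (r : 'I_3) (g : 'I_3) (w : word) : tmx R :=
  match w with
  | [::] => genmx R r g
  | h :: w' => tmxmul (genmx R r g) (rho_ne R r h w')
  end.

Definition rho_r (R : realType) (r : 'I_3) (w : word) : tmx R :=
  match w with
  | [::] => idmx R r
  | g :: w' => rho_ne R r g w'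
  end.

Definition rho (R : realType) (w : word) : tmx R * tmx R * tmx R :=
  (rho_r R 0 w, rho_r R 1 w, rho_r R 2 w).

Definition tmx3mul (R : realType) (X Y : tmx R * tmx R * tmx R) : tmx R * tmx R * tmx R :=
  (tmxmul X.1.1 Y.1.1, tmxmul X.1.2 Y.1.2, tmxmul X.2 Y.2).

From Pilot Require Import Defs.
From Stdlib Require Import Setoid Morphisms.
From mathcomp Require Import all_boot all_order all_algebra.
From mathcomp Require Import reals.
From mathcomp Require Import zify.
Set Implicit Arguments. Unset Strict Implicit. Unset Printing Implicit Defensive.
Import Order.TTheory GRing.Theory Num.Theory.

(** Every word is congruent to a word in the normal form
    a^p (ba)^q b^r (ca)^s (cb)^u c^v of Cassaigne, Espie, Krob, Novelli and
    Hivert, reached by appending the letters one at a time.  All the matrices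
    involved are upper triangular with integer entries, so each rho_r factors
    through a monoid of integer triples.  The defining relations
    hold there (a finite check), so rho is well defined and a homomorphism, and
    the identity triple is neutral on the submonoid generated by the images of
    the letters.  On a normal form the nine entries of rho are linear in
    (p, q, r, s, u, v) and determine these six exponents, so words with the same
    image have the same normal form and are therefore congruent. *)

Lemma chcong_catl p u v : chcong u v -> chcong (p ++ u) (p ++ v).
Proof.
elim=> [p' q x y xy | w | u' v' _ IH | u' v' w _ IH1 _ IH2].
- by rewrite !catA -!(catA (p ++ p')); apply: chcong_step.
- exact: chcong_refl.
- exact: chcong_sym.
- exact: chcong_trans IH1 IH2.
Qed.

Lemma chcong_catr q u v : chcong u v -> chcong (u ++ q) (v ++ q).
Proof.
elim=> [p q' x y xy | w | u' v' _ IH | u' v' w _ IH1 _ IH2].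
- by rewrite -!catA; apply: chcong_step.
- exact: chcong_refl.
- exact: chcong_sym.
- exact: chcong_trans IH1 IH2.
Qed.

#[export] Hint Resolve chcong_refl : core.

#[export] Instance chcong_equiv : Equivalence chcong.
Proof. split; [exact: chcong_refl | exact: chcong_sym | exact: chcong_trans]. Qed.

#[export] Instance cat_chcong_proper :
  Proper (chcong ==> chcong ==> chcong) (@cat 'I_3).
Proof.
move=> u u' uu' v v' vv'.
exact: chcong_trans (chcong_catr _ uu') (chcong_catl _ vv').
Qed.

Lemma chcong_chrel (i j k : 'I_3) x y : (i <= j)%N -> (j <= k)%N ->
  (x = [:: j; k; i] \/ x = [:: k; j; i] \/ x = [:: k; i; j]) ->
  (y = [:: j; k; i] \/ y = [:: k; j; i] \/ y = [:: k; i; j]) -> chcong x y.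
Proof.
move=> ij jk x3 y3.
have := @chcong_step [::] [::] x y; rewrite /= !cats0; apply.
by exists i, j, k.
Qed.

Definition ga : 'I_3 := @Ordinal 3 0 isT.
Definition gb : 'I_3 := @Ordinal 3 1 isT.
Definition gc : 'I_3 := @Ordinal 3 2 isT.

Lemma ord3P (g : 'I_3) : [\/ g = ga, g = gb | g = gc].
Proof.
by case: g => [[|[|[|//]]] ?]; [apply: Or31 | apply: Or32 | apply: Or33];
  apply: val_inj.
Qed.

Lemma ba_a_commute : chcong ([:: gb; ga] ++ [:: ga]) ([:: ga] ++ [:: gb; ga]).
Proof. by apply: (@chcong_chrel ga ga gb); auto. Qed.

Lemma b_ba_commute : chcong ([:: gb] ++ [:: gb; ga]) ([:: gb; ga] ++ [:: gb]).
Proof. by apply: (@chcong_chrel ga gb gb); auto. Qed.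

Lemma ca_a_commute : chcong ([:: gc; ga] ++ [:: ga]) ([:: ga] ++ [:: gc; ga]).
Proof. by apply: (@chcong_chrel ga ga gc); auto. Qed.

Lemma ca_b_commute : chcong ([:: gc; ga] ++ [:: gb]) ([:: gb] ++ [:: gc; ga]).
Proof. by apply: (@chcong_chrel ga gb gc); auto. Qed.

Lemma c_ca_commute : chcong ([:: gc] ++ [:: gc; ga]) ([:: gc; ga] ++ [:: gc]).
Proof. by apply: (@chcong_chrel ga gc gc); auto. Qed.

Lemma cb_b_commute : chcong ([:: gc; gb] ++ [:: gb]) ([:: gb] ++ [:: gc; gb]).
Proof. by apply: (@chcong_chrel gb gb gc); auto. Qed.

Lemma c_cb_commute : chcong ([:: gc] ++ [:: gc; gb]) ([:: gc; gb] ++ [:: gc]).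
Proof. by apply: (@chcong_chrel gb gc gc); auto. Qed.

Lemma cba_bca : chcong [:: gc; gb; ga] [:: gb; gc; ga].
Proof. by apply: (@chcong_chrel ga gb gc); auto. Qed.

Lemma cb_ca_commute : chcong ([:: gc; gb] ++ [:: gc; ga]) ([:: gc; ga] ++ [:: gc; gb]).
Proof.
have step1 := chcong_catl [:: gc] (chcong_sym ca_b_commute).
have step2 := chcong_catr [:: gb] c_ca_commute.
exact: chcong_trans step1 step2.
Qed.

Definition wpow (x : word) (n : nat) : word := flatten (nseq n x).
Arguments wpow : simpl never.

Lemma wpow0 x : wpow x 0 = [::]. Proof. by []. Qed.

Lemma wpowSr x n : wpow x n.+1 = wpow x n ++ x.
Proof. by rewrite /wpow -[n.+1]addn1 nseqD flatten_cat /= cats0. Qed.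

Lemma chcong_wpow_commute x y n :
  chcong (x ++ y) (y ++ x) -> chcong (wpow x n ++ y) (y ++ wpow x n).
Proof.
move=> xy; elim: n => [|n IH]; first by rewrite wpow0 cats0.
by rewrite wpowSr -catA xy catA IH -catA.
Qed.

Lemma chcong_wpow_commute_cat n x y z : chcong (x ++ y) (y ++ x) ->
  chcong (wpow x n ++ y ++ z) (y ++ wpow x n ++ z).
Proof. by move=> xy; rewrite !catA (chcong_wpow_commute n xy). Qed.

Record chexp := ChExp { ea : nat; eba : nat; eb : nat; eca : nat; ecb : nat; ec : nat }.

Definition nf_word (e : chexp) : word :=
  wpow [:: ga] (ea e) ++ wpow [:: gb; ga] (eba e) ++ wpow [:: gb] (eb e) ++
  wpow [:: gc; ga] (eca e) ++ wpow [:: gc; gb] (ecb e) ++ wpow [:: gc] (ec e).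

Definition exp_rcons (g : 'I_3) (e : chexp) : chexp :=
  let: ChExp p q r s u v := e in
  match nat_of_ord g with
  | 0 => if v is v'.+1 then ChExp p q r s.+1 u v'
         else if u is u'.+1 then ChExp p q r.+1 s.+1 u' v
         else if r is r'.+1 then ChExp p q.+1 r' s u v
         else ChExp p.+1 q r s u v
  | 1 => if v is v'.+1 then ChExp p q r s u.+1 v' else ChExp p q r.+1 s u v
  | _ => ChExp p q r s u v.+1
  end.

Ltac unfold_nf_word :=
  rewrite /nf_word; cbn -[wpow]; rewrite ?wpow0 ?wpowSr ?cat0s -?catA ?cats0 ?cat0s.

Lemma nf_word_rcons_a e : chcong (nf_word e ++ [:: ga]) (nf_word (exp_rcons ga e)).
Proof.
case: e => p q r s u [|v]; [case: u => [|u]; [case: r => [|r]|] |]; unfold_nf_word.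
- rewrite (chcong_wpow_commute s ca_a_commute).
  by rewrite (chcong_wpow_commute_cat q _ ba_a_commute).
- rewrite (chcong_wpow_commute s ca_a_commute).
  by rewrite (chcong_wpow_commute_cat r _ b_ba_commute).
- rewrite (cba_bca : chcong ([:: gc; gb] ++ [:: ga]) ([:: gb] ++ [:: gc; ga])).
  rewrite (chcong_wpow_commute_cat u _ cb_b_commute).
  rewrite (chcong_wpow_commute u cb_ca_commute).
  by rewrite (chcong_wpow_commute_cat s _ ca_b_commute).
- rewrite (chcong_wpow_commute v c_ca_commute).
  by rewrite (chcong_wpow_commute_cat u _ cb_ca_commute).
Qed.

Lemma nf_word_rcons_b e : chcong (nf_word e ++ [:: gb]) (nf_word (exp_rcons gb e)).
Proof.
case: e => p q r s u [|v]; unfold_nf_word.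
- rewrite (chcong_wpow_commute u cb_b_commute).
  by rewrite (chcong_wpow_commute_cat s _ ca_b_commute).
- by rewrite (chcong_wpow_commute v c_cb_commute).
Qed.

Lemma nf_word_rcons_c e : chcong (nf_word e ++ [:: gc]) (nf_word (exp_rcons gc e)).
Proof. by case: e => p q r s u v; unfold_nf_word. Qed.

Lemma nf_word_rcons g e : chcong (nf_word e ++ [:: g]) (nf_word (exp_rcons g e)).
Proof.
by case: (ord3P g) => ->;
  [exact: nf_word_rcons_a | exact: nf_word_rcons_b | exact: nf_word_rcons_c].
Qed.

Definition nf (w : word) : chexp :=
  foldl (fun e g => exp_rcons g e) (ChExp 0 0 0 0 0 0) w.

Lemma nf_rcons w g : nf (rcons w g) = exp_rcons g (nf w).
Proof. by rewrite /nf foldl_rcons. Qed.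

Lemma chcong_nf w : chcong w (nf_word (nf w)).
Proof.
elim/last_ind: w => [|w g IH] //.
by rewrite nf_rcons -nf_word_rcons -cats1; apply: chcong_catr.
Qed.

Local Open Scope ring_scope.

(* The triple (x, y, t) stands for the tropical matrix (x y; -oo t). *)
Definition ut := (int * int * int)%type.

Definition utmul (a b : ut) : ut :=
  (a.1.1 + b.1.1, Num.max (a.1.1 + b.1.2) (a.1.2 + b.2), a.2 + b.2).

Lemma utmulA : associative utmul.
Proof.
move=> [[x1 y1] t1] [[x2 y2] t2] [[x3 y3] t3].
by rewrite /utmul /=; congr (_, _, _); lia.
Qed.

Definition utgen (r g : 'I_3) : ut :=
  match nat_of_ord r, nat_of_ord g with
  | 0, 0 => (1, 0, 0)
  | 0, _ => (0, 0, 1)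
  | 1, 2 => (0, 0, 1)
  | 1, _ => (1, 0, 0)
  | _, 0 => (1, 1, 0)
  | _, 1 => (0, 0, 0)
  | _, _ => (0, 1, 1)
  end.

Definition utid (r : 'I_3) : ut := if (r <= 1)%N then (0, -1, 0) else (0, 0, 0).

Definition unital (r : 'I_3) (a : ut) := utmul (utid r) a = a /\ utmul a (utid r) = a.

Lemma unital_mul r a b : unital r a -> unital r b -> unital r (utmul a b).
Proof. by move=> [la ra] [lb rb]; split; [rewrite utmulA la | rewrite -utmulA rb]. Qed.

Lemma unital_gen r g : unital r (utgen r g).
Proof. by case: r => [[|[|[|//]]] ?]; case: g => [[|[|[|//]]] ?]. Qed.

Lemma unital_id r : unital r (utid r).
Proof. by case: r => [[|[|[|//]]] ?]. Qed.

Definition utw (r : 'I_3) (w : word) : ut :=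
  foldr (fun g => utmul (utgen r g)) (utid r) w.

Lemma unital_utw r w : unital r (utw r w).
Proof.
by elim: w => [|g w IH] /=; [exact: unital_id | exact: unital_mul (unital_gen r g) IH].
Qed.

Lemma utw_cat r u v : utw r (u ++ v) = utmul (utw r u) (utw r v).
Proof.
elim: u => [|g u IH] /=; first by rewrite (unital_utw r v).1.
by rewrite IH utmulA.
Qed.

Lemma utw1 r g : utw r [:: g] = utgen r g.
Proof. exact: (unital_gen r g).2. Qed.

Lemma utw_chrel r x y : ch_rel x y -> utw r x = utw r y.
Proof.
move=> [i [j [k [ij [jk [x3 y3]]]]]].
suff [e1 e3] : utw r [:: j; k; i] = utw r [:: k; j; i] /\
               utw r [:: k; i; j] = utw r [:: k; j; i].
  by case: x3 => [|[|]] ->; case: y3 => [|[|]] ->; rewrite ?e1 ?e3.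
clear x3 y3; move: ij jk; case: r => [[|[|[|//]]] ?]; case: i => [[|[|[|//]]] ?];
  case: j => [[|[|[|//]]] ?]; case: k => [[|[|[|//]]] ?] //.
Qed.

Lemma utw_chcong r u v : chcong u v -> utw r u = utw r v.
Proof.
elim=> [p q x y /(utw_chrel r) xy | // | // | u' v' w _ -> _ -> //].
by rewrite !utw_cat xy.
Qed.

Section TropicalMatrices.
Variable R : realType.

Definition ut_mx (a : ut) : tmx R :=
  mx2 (Some a.1.1%:~R) (Some a.1.2%:~R) None (Some a.2%:~R).

Lemma intr_max (m n : int) : ((Num.max m n)%:~R : R) = Num.max m%:~R n%:~R.
Proof.
case: (lerP m n) => mn; first by rewrite !max_r ?ler_int.
by rewrite !max_l ?ler_int ?ltW.
Qed.

Lemma tmxmul_ut_mx a b : tmxmul (ut_mx a) (ut_mx b) = ut_mx (utmul a b).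
Proof.
case: a => [[x1 y1] t1]; case: b => [[x2 y2] t2].
apply/matrixP => i j; rewrite /tmxmul /ut_mx /mx2 /utmul !mxE /=.
by case: i => [[|[|//]] ?]; case: j => [[|[|//]] ?]; rewrite //= ?intr_max !intrD.
Qed.

Lemma ut_mx_inj : injective ut_mx.
Proof.
move=> [[x1 y1] t1] [[x2 y2] t2] /matrixP eq12.
have := eq12 ord0 ord0; have := eq12 ord0 ord_max; have := eq12 ord_max ord_max.
rewrite /ut_mx /mx2 !mxE /= => -[/intr_inj ->] [/intr_inj ->] [/intr_inj ->] //.
Qed.

Lemma genmx_ut_mx r g : Defs.genmx R r g = ut_mx (utgen r g).
Proof.
by case: r => [[|[|[|//]]] ?]; case: g => [[|[|[|//]]] ?];
  rewrite /ut_mx /T0 /T1 /Tinf /= ?rmorph0 ?rmorph1.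
Qed.

Lemma idmx_ut_mx r : idmx R r = ut_mx (utid r).
Proof.
by case: r => [[|[|[|//]]] ?]; rewrite /ut_mx /T0 /Tm1 /Tinf /= ?rmorph0 ?rmorphN1.
Qed.

Lemma rho_r_ut_mx r w : rho_r R r w = ut_mx (utw r w).
Proof.
case: w => [|g w] /=; first exact: idmx_ut_mx.
elim: w g => [|h w IH] g /=; first by rewrite (unital_gen r g).2 genmx_ut_mx.
by rewrite IH genmx_ut_mx tmxmul_ut_mx.
Qed.

End TropicalMatrices.

(* The value of rho_r on the normal form a^p (ba)^q b^r (ca)^s (cb)^u c^v. *)
Definition ut_exp (k : 'I_3) (e : chexp) : ut :=
  let na := (ea e + eba e + eca e)%:Z in
  let nb := (eba e + eb e + ecb e)%:Z in
  let nc := (eca e + ecb e + ec e)%:Z in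
  match nat_of_ord k with
  | 0 => (na, (ea e + eba e + eb e + eca e + 2 * ecb e + ec e)%:Z - 1, nb + nc)
  | 1 => (na + nb, (ea e + 2 * eba e + eb e + eca e + ecb e + ec e)%:Z - 1, nc)
  | _ => (na, (ea e + eba e + eca e + ecb e + ec e)%:Z, nc)
  end.

Lemma ut_exp_rcons k g e : ut_exp k (exp_rcons g e) = utmul (ut_exp k e) (utgen k g).
Proof.
case: e => p q [|r] s [|u] [|v]; case: k => [[|[|[|//]]] ?];
  case: g => [[|[|[|//]]] ?]; rewrite /ut_exp /utmul /=; congr (_, _, _); lia.
Qed.

Lemma utw_nf k w : utw k w = ut_exp k (nf w).
Proof.
elim/last_ind: w => [|w g IH]; first by case: k => [[|[|[|//]]] ?].
by rewrite nf_rcons ut_exp_rcons -IH -cats1 utw_cat utw1.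
Qed.

Lemma ut_exp_inj e e' :
  ut_exp ga e = ut_exp ga e' -> ut_exp gb e = ut_exp gb e' ->
  ut_exp gc e = ut_exp gc e' -> e = e'.
Proof.
case: e => p q r s u v; case: e' => p' q' r' s' u' v'.
by move=> [? ? ?] [? ? ?] [? ? ?]; congr ChExp; lia.
Qed.

Theorem lemmaA1 (R : realType) :
  (* well-defined on Ch_3 *)
  (forall u v : word, chcong u v -> rho R u = rho R v) /\
  (* the identity triple is a two-sided identity on the image *)
  (forall w : word, tmx3mul (rho R [::]) (rho R w) = rho R w /\
                    tmx3mul (rho R w) (rho R [::]) = rho R w) /\
  (* homomorphism *)
  (forall u v : word, rho R (u ++ v) = tmx3mul (rho R u) (rho R v)) /\
  (* injective on Ch_3 *)
  (forall u v : word, rho R u = rho R v -> chcong u v).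
Proof.
have rhoE w : rho R w = (ut_mx R (utw 0 w), ut_mx R (utw 1 w), ut_mx R (utw 2 w)).
  by rewrite /rho !rho_r_ut_mx.
have rho_cat u v : rho R (u ++ v) = tmx3mul (rho R u) (rho R v).
  by rewrite !rhoE /tmx3mul /= !tmxmul_ut_mx !utw_cat.
split; first by move=> u v uv; rewrite !rhoE !(utw_chcong _ uv).
split; first by move=> w; rewrite -!rho_cat cats0.
split; first exact: rho_cat.
move=> u v; rewrite !rhoE => -[/ut_mx_inj eq_a /ut_mx_inj eq_b /ut_mx_inj eq_c].
have nf_uv : nf u = nf v by apply: ut_exp_inj; rewrite -!utw_nf.
apply: chcong_trans (chcong_nf u) _; rewrite nf_uv.
exact: chcong_sym (chcong_nf v).
Qed.
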